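(* Let $X$ be a real normed linear space and let $\varepsilon\in[0,2)$. (1) If $X^*$ is $\varepsilon$-smooth, then $X$ is $\varepsilon$-rotund. (2) If $X^*$ is $\varepsilon$-rotund, then $X$ is $\varepsilon$-smooth. (3) If $X$ is reflexive, then $X$ is $\varepsilon$-smooth if and only if $X^*$ is $\varepsilon$-rotund, and $X$ is $\varepsilon$-rotund if and only if $X^*$ is $\varepsilon$-smooth.
   Context: For a normed space $Z$ and $z\in Z\setminus\{\theta\}$, $J(z)=\{\phi\in S_{Z^*}:\phi(z)=\|z\|\}$; $Z$ is $\varepsilon$-smooth if $\operatorname{diam}J(z)=\sup_{\phi,\psi\in J(z)}\|\phi-\psi\|\le\varepsilon$ for every $z\in S_Z$. $Z$ is $\varepsilon$-rotund if for every $\phi\in S_{Z^*}$, $\operatorname{diam}\{z\in S_Z:\phi(z)=1\}\le\varepsilon$. These notions are applied to $X$ and to its dual $X^*$ (whose dual is $X^{**}$). *)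

(* Dual spaces are realised concretely: the dual of a "space"
   (V, D, N) -- a carrier lmodType V, a subspace D : set V and a norm N on D --
   is ((V -> R^o), dual_set D N, dual_norm D N), i.e. the set of linear
   functionals on D bounded for N, with the operator norm.  This lets us
   iterate: X, X^*, X^** . *)
From HB Require Import structures.
From mathcomp Require Import all_boot all_order all_algebra.
From mathcomp Require Import all_classical all_reals all_analysis.
Set Implicit Arguments. Unset Strict Implicit. Unset Printing Implicit Defensive.
Import Order.TTheory GRing.Theory Num.Theory.
Import numFieldNormedType.Exports.
Local Open Scope classical_set_scope.
Local Open Scope ring_scope.


Definition linear_on {R : realType} {V : lmodType R} (D : set V) (f : V -> R^o) : Prop :=
  forall (a : R) (x y : V), D x -> D y -> f (a *: x + y) = a * f x + f y.

Definition bounded_on {R : realType} {V : lmodType R} (D : set V) (N : V -> R) (f : V -> R^o) : Prop :=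
  exists C : R, forall x, D x -> `|(f x : R)| <= C * N x.

Definition dual_set {R : realType} {V : lmodType R} (D : set V) (N : V -> R) : set (V -> R^o) :=
  [set f | linear_on D f /\ bounded_on D N f].

Definition dual_norm {R : realType} {V : lmodType R} (D : set V) (N : V -> R) (f : V -> R^o) : R :=
  sup [set r | exists x, [/\ D x, N x <= 1 & r = `|(f x : R)|]].

Definition sphere {R : realType} {V : lmodType R} (D : set V) (N : V -> R) : set V := [set z | D z /\ N z = 1].

Definition diam {R : realType} {V : lmodType R} (N : V -> R) (A : set V) : R :=
  sup [set r | exists x y, [/\ A x, A y & r = N (x - y)]].

Definition Jmap {R : realType} {V : lmodType R} (D : set V) (N : V -> R) (z : V) : set (V -> R^o) :=
  [set phi | sphere (dual_set D N) (dual_norm D N) phi /\ phi z = N z].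

Definition eps_smooth {R : realType} {V : lmodType R} (D : set V) (N : V -> R) (eps : R) : Prop :=
  forall z, sphere D N z -> diam (dual_norm D N) (Jmap D N z) <= eps.

Definition eps_rotund {R : realType} {V : lmodType R} (D : set V) (N : V -> R) (eps : R) : Prop :=
  forall phi, sphere (dual_set D N) (dual_norm D N) phi ->
    diam N [set z | sphere D N z /\ phi z = 1] <= eps.

Definition reflexive_space {R : realType} {V : lmodType R} (D : set V) (N : V -> R) : Prop :=
  forall psi, dual_set (dual_set D N) (dual_norm D N) psi ->
    exists2 x, D x & forall phi, dual_set D N phi -> psi phi = phi x.


Definition Xdual_set (R : realType) (X : normedModType R) : set (X -> R^o) :=
  dual_set [set: X] (fun x : X => `|x|).
Definition Xdual_norm (R : realType) (X : normedModType R) : (X -> R^o) -> R :=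
  dual_norm [set: X] (fun x : X => `|x|).
Arguments Xdual_set {R} X.
Arguments Xdual_norm {R} X.

From HB Require Import structures.
From mathcomp Require Import all_boot all_order all_algebra.
From mathcomp Require Import all_classical all_reals all_analysis.
From mathcomp Require Import ring lra.
Import Order.TTheory GRing.Theory Num.Theory.
Import numFieldNormedType.Exports.
Local Open Scope classical_set_scope.
Local Open Scope ring_scope.

(* The canonical map [ev : X -> X^**] is an isometry, because Hahn-Banach provides
   norming functionals.  For a unit functional [phi], [ev] maps the face
   [{x in S_X | phi x = 1}] into [J(phi)], which lies in [S_X^**]; for a unit vector [x],
   [J(x)] is exactly the face of [S_X^*] exposed by [ev x].  Hence diameters on the side of
   [X] are bounded by those on the side of [X^*], and when [ev] is onto (reflexivity) the
   two families of sets correspond exactly. *)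

Lemma ge0_ge_sup (R : realType) (E : set R) (M : R) :
  0 <= M -> ubound E M -> sup E <= M.
Proof.
move=> M0 EM; have [E0|En0] := pselect (E !=set0); first exact: ge_sup.
suff -> : E = set0 by rewrite sup0.
by apply/seteqP; split=> // r Er; apply: En0; exists r.
Qed.

Section LinearOn.
Context {R : realType} {V : lmodType R} {D : set V} {f : V -> R^o}.
Hypothesis flin : linear_on D f.

Lemma linear_on0 : D 0 -> f 0 = 0.
Proof.
move=> D0; have := flin 1 0 0 D0 D0; rewrite scale1r addr0 mul1r => /esym/eqP.
by rewrite -subr_eq0 addrK => /eqP.
Qed.

Lemma linear_onZ a x : D 0 -> D x -> f (a *: x) = a * f x.
Proof. by move=> D0 Dx; rewrite -[a *: x]addr0 (flin a x 0) // linear_on0 // addr0. Qed.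

Lemma linear_onB x y : D x -> D y -> f (x - y) = f x - f y.
Proof. by move=> Dx Dy; rewrite addrC -scaleN1r (flin (-1) y x) // mulN1r addrC. Qed.

End LinearOn.

Section Diameter.
Context {R : realType} {V : lmodType R} {N : V -> R}.

Lemma diam_le (A : set V) e : 0 <= e ->
  (forall x y, A x -> A y -> N (x - y) <= e) -> diam N A <= e.
Proof. by move=> e0 AE; apply: ge0_ge_sup => // _ [x [y [Ax Ay ->]]]; exact: AE. Qed.

Lemma le_diam (A : set V) M x y :
  (forall x y, A x -> A y -> N (x - y) <= M) -> A x -> A y -> N (x - y) <= diam N A.
Proof.
move=> AM Ax Ay; apply: ub_le_sup; last by exists x, y.
by exists M => _ [u [v [Au Av ->]]]; exact: AM.
Qed.

End Diameter.

Record gauged_subspace {R : realType} {V : lmodType R} (D : set V) (N : V -> R) : Prop :=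
  GaugedSubspace {
  gauged_subspace0 : D 0;
  gauged_subspace_lin : forall a x y, D x -> D y -> D (a *: x + y);
  gauge_ge0 : forall x, D x -> 0 <= N x;
  gaugeZ : forall a x, D x -> N (a *: x) = `|a| * N x }.
Arguments gauged_subspace0 {R V D N}.
Arguments gauged_subspace_lin {R V D N} _ a {x y}.
Arguments gauge_ge0 {R V D N} _ {x}.
Arguments gaugeZ {R V D N} _ a {x}.

Section Dual.
Context {R : realType} {V : lmodType R} {D : set V} {N : V -> R}.

Lemma dual_set_lin (f g : V -> R^o) a :
  dual_set D N f -> dual_set D N g -> dual_set D N (a *: f + g).
Proof.
move=> [flin [C fC]] [glin [C' gC']]; split.
  by move=> b x y Dx Dy; rewrite !fctE flin // glin //= /GRing.scale /=; ring.
exists (`|a| * C + C') => x Dx; rewrite !fctE /GRing.scale /=.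
apply: (le_trans (ler_normD _ _)); rewrite mulrDl -mulrA normrM.
by apply: lerD; [rewrite ler_wpM2l ?fC | exact: gC'].
Qed.

Lemma dual_set0 : dual_set D N (0 : V -> R^o).
Proof.
split; first by move=> a x y _ _ /=; rewrite mulr0 addr0.
by exists 0 => x _ /=; rewrite normr0 mul0r.
Qed.

Lemma eq_dual_norm (f g : V -> R^o) :
  (forall x, D x -> f x = g x) -> dual_norm D N f = dual_norm D N g.
Proof.
move=> fg; congr sup; apply/seteqP; split=> _ [x [Dx Nx ->]];
  by exists x; rewrite fg.
Qed.

Lemma dual_norm_le (f : V -> R^o) M : 0 <= M ->
  (forall x, D x -> `|(f x : R)| <= M * N x) -> dual_norm D N f <= M.
Proof.
move=> M0 fM; apply: ge0_ge_sup => // _ [x [Dx Nx ->]].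
by apply: (le_trans (fM x Dx)); rewrite -[leRHS]mulr1 ler_wpM2l.
Qed.

Hypothesis DN : gauged_subspace D N.

Lemma gauge0 : N 0 = 0.
Proof.
by rewrite -(scale0r 0) (gaugeZ DN) ?normr0 ?mul0r //; exact: gauged_subspace0 DN.
Qed.

Lemma le_dual_norm {f : V -> R^o} {x} : dual_set D N f -> D x -> N x <= 1 ->
  `|(f x : R)| <= dual_norm D N f.
Proof.
move=> [_ [C fC]] Dx Nx; apply: ub_le_sup; last by exists x.
exists `|C| => _ [y [Dy Ny ->]]; apply: (le_trans (fC y Dy)).
apply: (le_trans (ler_wpM2r (gauge_ge0 DN Dy) (ler_norm C))).
by rewrite -[leRHS]mulr1 ler_wpM2l.
Qed.

Lemma dual_norm_ge0 {f : V -> R^o} : dual_set D N f -> 0 <= dual_norm D N f.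
Proof.
move=> fD; apply: le_trans (normr_ge0 (f 0 : R)) (le_dual_norm fD _ _).
  exact: gauged_subspace0 DN.
by rewrite gauge0.
Qed.

Lemma dual_norm_bound {f : V -> R^o} {x} : dual_set D N f -> D x ->
  `|(f x : R)| <= dual_norm D N f * N x.
Proof.
move=> fD Dx; have [flin [C fC]] := fD.
have [Nx0|Nx0] := eqVneq (N x) 0; first by have := fC x Dx; rewrite Nx0 !mulr0.
have Nx_gt0 : 0 < N x by rewrite lt0r Nx0 (gauge_ge0 DN).
have D0 := gauged_subspace0 DN.
have Dx' : D ((N x)^-1 *: x) by rewrite -[_ *: x]addr0; exact: (gauged_subspace_lin DN).
have Ninv : `|(N x)^-1| = (N x)^-1 by rewrite gtr0_norm ?invr_gt0.
have := le_dual_norm fD Dx'.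
rewrite (gaugeZ DN) // (linear_onZ flin) // normrM !Ninv mulVf // => /(_ (lexx 1)) le_f.
by rewrite mulrC -[leLHS]mul1r -(mulfV Nx0) -mulrA ler_wpM2l // ltW.
Qed.

Lemma dual_normZ (f : V -> R^o) a : dual_set D N f ->
  dual_norm D N (a *: f) = `|a| * dual_norm D N f.
Proof.
have normZ_le b (g : V -> R^o) : dual_set D N g ->
    dual_norm D N (b *: g) <= `|b| * dual_norm D N g.
  move=> gD; apply: dual_norm_le => [|x Dx]; first by rewrite mulr_ge0 ?dual_norm_ge0.
  by rewrite /= normrM -mulrA ler_wpM2l ?dual_norm_bound.
move=> fD; apply/eqP; rewrite eq_le normZ_le //=.
have [->|a0] := eqVneq a 0.
  by rewrite normr0 mul0r dual_norm_ge0 // scale0r; exact: dual_set0.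
have afD : dual_set D N (a *: f).
  by rewrite -[_ *: f]addr0; apply: dual_set_lin => //; exact: dual_set0.
have := ler_wpM2l (normr_ge0 a) (normZ_le a^-1 _ afD).
by rewrite scalerA mulVf // scale1r normrV ?unitfE // mulrA mulfV ?normr_eq0 // mul1r.
Qed.

Lemma dual_normB {f g : V -> R^o} : dual_set D N f -> dual_set D N g ->
  dual_norm D N (f - g) <= dual_norm D N f + dual_norm D N g.
Proof.
move=> fD gD; apply: dual_norm_le => [|x Dx]; first by rewrite addr_ge0 ?dual_norm_ge0.
by apply: (le_trans (ler_normB _ _)); rewrite mulrDl lerD ?dual_norm_bound.
Qed.

Lemma gauged_subspace_dual : gauged_subspace (dual_set D N) (dual_norm D N).
Proof.
split=> [|a f g|f|a f]; [exact: dual_set0 | exact: dual_set_lin | exact: dual_norm_ge0 |].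
exact: dual_normZ.
Qed.

Lemma dual_sphere_distance_le2 {f g : V -> R^o} :
  sphere (dual_set D N) (dual_norm D N) f -> sphere (dual_set D N) (dual_norm D N) g ->
  dual_norm D N (f - g) <= 2.
Proof. by move=> [fD f1] [gD g1]; have := dual_normB fD gD; rewrite f1 g1. Qed.

End Dual.

Section Bidual.
Context {R : realType} {V : lmodType R} {D : set V} {N : V -> R}.
Hypothesis DN : gauged_subspace D N.

Definition ev (x : V) : (V -> R^o) -> R^o := fun f => f x.

Lemma ev_bidual x : D x -> dual_set (dual_set D N) (dual_norm D N) (ev x).
Proof.
move=> Dx; split=> [a f g _ _ //|].
by exists (N x) => f fD; rewrite mulrC (dual_norm_bound DN).
Qed.

Lemma bidual_norm_ev_le x : D x -> dual_norm (dual_set D N) (dual_norm D N) (ev x) <= N x.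
Proof.
move=> Dx; apply: dual_norm_le => [|f fD]; first by have := gauge_ge0 DN Dx.
by rewrite /ev mulrC (dual_norm_bound DN fD Dx).
Qed.

End Bidual.

Section HahnBanach.
Context {R : realType} {X : normedModType R}.

Definition dominated_linear_graph (G : set (X * R)) : Prop :=
  [/\ forall a x y u v, G (x, u) -> G (y, v) -> G (a *: x + y, a * u + v),
      forall x u v, G (x, u) -> G (x, v) -> u = v
    & forall x u, G (x, u) -> u <= `|x|].

Lemma dominated_linear_graph00 : dominated_linear_graph [set (0, 0)].
Proof.
split=> [a x y u v [-> ->] [-> ->]|x u v [_ ->] [_ ->] //|x u [-> ->]].
  by rewrite scaler0 mulr0 !addr0.
by rewrite normr0.
Qed.

Lemma dominated_linear_graph_bigcup (F : set (set (X * R))) :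
  F `<=` dominated_linear_graph -> total_on F subset ->
  dominated_linear_graph (\bigcup_(G in F) G).
Proof.
move=> FG Ftot; split.
- move=> a x y u v [G1 FG1 G1xu] [G2 FG2 G2yv].
  have [G12|G21] := Ftot _ _ FG1 FG2.
    by exists G2 => //; have [lin _ _] := FG _ FG2; apply: lin => //; exact: G12.
  by exists G1 => //; have [lin _ _] := FG _ FG1; apply: lin => //; exact: G21.
- move=> x u v [G1 FG1 G1xu] [G2 FG2 G2xv].
  have [G12|G21] := Ftot _ _ FG1 FG2.
    by have [_ fn _] := FG _ FG2; exact: fn (G12 _ G1xu) G2xv.
  by have [_ fn _] := FG _ FG1; exact: fn G1xu (G21 _ G2xv).
- by move=> x u [G FG' Gxu]; have [_ _ dom] := FG _ FG'; exact: dom.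
Qed.

Definition graph_adjoin (G : set (X * R)) (y : X) (c : R) : set (X * R) :=
  [set p | exists x u t, G (x, u) /\ p = (x + t *: y, u + t * c)].

Section Adjoin.
Context {G : set (X * R)} (y : X).
Hypotheses (Gdom : dominated_linear_graph G) (G00 : G (0, 0)).

Let Gscale a {x u} : G (x, u) -> G (a *: x, a * u).
Proof. by case: Gdom => lin _ _ Gxu; have := lin a _ _ _ _ Gxu G00; rewrite !addr0. Qed.

Lemma graph_adjoin_sub c : G `<=` graph_adjoin G y c.
Proof. by move=> [x u] Gxu; exists x, u, 0; rewrite scale0r mul0r !addr0. Qed.

Lemma graph_adjoin_constant : exists c,
  forall x u, G (x, u) -> u + c <= `|x + y| /\ u - c <= `|x - y|.
Proof.
have [lin _ dom] := Gdom.
pose L := [set r | exists x u, G (x, u) /\ r = u - `|x - y|].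
(* [u' + u <= `|x' + x| <= `|x' - y| + `|x + y|] for any two points of [G] *)
have L_ub x u : G (x, u) -> ubound L (`|x + y| - u).
  move=> Gxu _ [x' [u' [Gxu' ->]]].
  have := dom _ _ (lin 1 _ _ _ _ Gxu' Gxu); rewrite scale1r mul1r => le_uu'.
  have := ler_normD (x' - y) (x + y); rewrite addrACA addNr addr0 => le_xx'.
  lra.
have Lsup : has_sup L by split; [exists (0 - `|0 - y|), 0, 0 | exists (`|0 + y| - 0); apply: L_ub].
exists (sup L) => x u Gxu; split.
  by have := ge_sup Lsup.1 (L_ub _ _ Gxu); lra.
have : u - `|x - y| <= sup L by apply: ub_le_sup Lsup.2 _ _; exists x, u.
lra.
Qed.

Variable c : R.
Hypothesis c_between : forall x u, G (x, u) -> u + c <= `|x + y| /\ u - c <= `|x - y|.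

Lemma graph_adjoin_dominated x u t : G (x, u) -> u + t * c <= `|x + t *: y|.
Proof.
move=> Gxu; case: (ltgtP t 0) => [t_lt0|t_gt0|->]; last first.
- by rewrite mul0r scale0r !addr0; case: Gdom => _ _; apply.
- have [le_c _] := c_between _ _ (Gscale t^-1 Gxu).
  have := ler_wpM2l (ltW t_gt0) le_c.
  rewrite mulrDr mulrA mulfV ?gt_eqF // mul1r -[s in s * `|_|](gtr0_norm t_gt0).
  by rewrite -normrZ scalerDr scalerA mulfV ?gt_eqF // scale1r.
- have nt_gt0 : 0 < - t by rewrite oppr_gt0.
  have [_ c_le] := c_between _ _ (Gscale (- t)^-1 Gxu).
  have := ler_wpM2l (ltW nt_gt0) c_le.
  rewrite mulrBr mulrA mulfV ?gt_eqF // mul1r mulNr opprK.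
  rewrite -[s in s * `|_|](gtr0_norm nt_gt0) -normrZ scalerBr scalerA mulfV ?gt_eqF //.
  by rewrite scale1r scaleNr opprK.
Qed.

Lemma dominated_linear_graph_adjoin :
  ~ (exists v, G (y, v)) -> dominated_linear_graph (graph_adjoin G y c).
Proof.
move=> y_notin; have [lin fn _] := Gdom; split.
- move=> a _ _ _ _ [x1 [u1 [t1 [G1 [-> ->]]]]] [x2 [u2 [t2 [G2 [-> ->]]]]].
  exists (a *: x1 + x2), (a * u1 + u2), (a * t1 + t2); split; first exact: lin.
  congr pair; last by ring.
  by rewrite scalerDr scalerA scalerDl addrACA.
- move=> _ _ _ [x1 [u1 [t1 [G1 [-> ->]]]]] [x2 [u2 [t2 [G2 [e ->]]]]].
  have [t12|t12] := eqVneq t1 t2.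
    rewrite -t12 in e *; have x12 : x1 = x2 := addIr _ e.
    by rewrite x12 in G1; rewrite (fn _ _ _ G1 G2).
  (* otherwise [y] would be [(t1 - t2)^-1 *: (x2 - x1)], in the domain of [G] *)
  case: y_notin; exists ((t1 - t2)^-1 * ((-1) * u1 + u2)).
  have e' : (-1) *: x1 + x2 = (t1 - t2) *: y.
    by rewrite scaleN1r scalerBl -[x2](addrK (t2 *: y)) -e addrA addKr.
  have := Gscale (t1 - t2)^-1 (lin (-1) _ _ _ _ G1 G2).
  by rewrite e' scalerA mulVf ?subr_eq0 // scale1r.
- by move=> _ _ [x [u [t [Gxu [-> ->]]]]]; exact: graph_adjoin_dominated.
Qed.

End Adjoin.

Lemma dominated_linear_graph_total {A : set (X * R)} :
  dominated_linear_graph A -> (forall y, exists v, A (y, v)) ->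
  exists f : X -> R, [/\ forall a x y, f (a *: x + y) = a * f x + f y,
    forall x, `|f x| <= `|x| & forall x, A (x, f x)].
Proof.
move=> [lin fn dom] /choice[f Af]; exists f; split=> // [a x y|x].
  exact: fn (Af _) (lin a _ _ _ _ (Af x) (Af y)).
have A00 : A (0, 0).
  by have := lin (-1) _ _ _ _ (Af 0) (Af 0); rewrite scaleN1r addNr mulN1r addNr.
have := dom _ _ (lin (-1) _ _ _ _ (Af x) A00).
rewrite !addr0 scaleN1r normrN mulN1r => le_Nfx.
by rewrite ler_norml -lerNl le_Nfx dom.
Qed.

Theorem hahn_banach_norming (x0 : X) : exists f : X -> R,
  [/\ forall a x y, f (a *: x + y) = a * f x + f y,
      forall x, `|f x| <= `|x| & f x0 = `|x0|].
Proof.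
have [-> | x0_neq0] := eqVneq x0 0.
  by exists (fun=> 0); split=> [a x y|x|]; rewrite ?normr0 ?mulr0 ?addr0.
(* The second clause is vacuous for the empty graph, the union of the empty chain. *)
pose P G := dominated_linear_graph G /\ (G !=set0 -> G (x0, `|x0|)).
have [A [[Adom Ax0] Amax]] : exists A, P A /\ forall B, A `<` B -> ~ P B.
  apply: Zorn_bigcup => F FP Ftot; split.
    by apply: dominated_linear_graph_bigcup => // G /FP[].
  by move=> [p [G FG Gp]]; exists G => //; apply: (FP G FG).2; exists p.
have A_x0 : A (x0, `|x0|).
  apply: Ax0; apply: contrapT => A_empty.
  pose line := graph_adjoin [set (0, 0)] x0 `|x0|.
  have line_x0 : line (x0, `|x0|) by exists 0, 0, 1; rewrite scale1r mul1r !add0r.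
  apply: (Amax line); split=> //.
  - by move=> p Ap; case: A_empty; exists p.
  - by move=> /(_ _ line_x0) A_x0; case: A_empty; exists (x0, `|x0|).
  - apply: dominated_linear_graph_adjoin => //.
    + exact: dominated_linear_graph00.
    + move=> _ _ [-> ->]; rewrite !add0r normrN.
      by have := normr_ge0 x0; split; lra.
    + by move=> [v [x0_0 _]]; rewrite x0_0 eqxx in x0_neq0.
have A00 : A (0, 0).
  have [lin _ _] := Adom; have := lin (-1) _ _ _ _ A_x0 A_x0.
  by rewrite scaleN1r addNr mulN1r addNr.
have [|f [flin fle Af]] := dominated_linear_graph_total Adom.
  move=> y; apply: contrapT => y_notin.
  have [c c_between] := graph_adjoin_constant y Adom A00.
  apply: (Amax (graph_adjoin A y c)); split.
  - exact: graph_adjoin_sub.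
  - move=> /(_ (y, c)) y_in; apply: y_notin; exists c; apply: y_in.
    by exists 0, 0, 1; rewrite scale1r mul1r !add0r.
  - exact: dominated_linear_graph_adjoin y Adom A00 c c_between y_notin.
  - by move=> _; exact: graph_adjoin_sub A_x0.
by exists f; split=> //; have [_ fn _] := Adom; exact: fn (Af x0) A_x0.
Qed.

End HahnBanach.

Section NormedDuality.
Context {R : realType} {X : normedModType R}.

Local Notation NX := (fun x : X => `|x|).
Local Notation bidual_set := (dual_set (Xdual_set X) (Xdual_norm X)).
Local Notation bidual_norm := (dual_norm (Xdual_set X) (Xdual_norm X)).

Lemma gauged_subspace_normed : gauged_subspace [set: X] NX.
Proof. by split=> // a x _; exact: normrZ. Qed.

Let gauged_dual := gauged_subspace_dual gauged_subspace_normed.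

Lemma norming_functional (x : X) :
  exists f, [/\ Xdual_set X f, Xdual_norm X f <= 1 & f x = `|x|].
Proof.
have [f [flin f_le fx]] := hahn_banach_norming x.
have fX : Xdual_set X f.
  by split=> [a u v _ _|]; [exact: flin | exists 1 => u _; rewrite mul1r].
by exists f; split=> //; apply: dual_norm_le => // u _; rewrite mul1r.
Qed.

Lemma bidual_norm_ev (x : X) : bidual_norm (ev x) = `|x|.
Proof.
apply/eqP; rewrite eq_le bidual_norm_ev_le //=; last exact: gauged_subspace_normed.
have [f [fX f_le1 fx]] := norming_functional x.
have := le_dual_norm gauged_dual (ev_bidual gauged_subspace_normed x I) fX f_le1.
by rewrite /ev fx normr_id.
Qed.

Lemma bidual_norm_sub_ev {P Q : (X -> R^o) -> R^o} {x y : X} :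
  (forall phi, Xdual_set X phi -> P phi = phi x) ->
  (forall phi, Xdual_set X phi -> Q phi = phi y) ->
  bidual_norm (P - Q) = `|x - y|.
Proof.
move=> Px Qy; rewrite -bidual_norm_ev; apply: eq_dual_norm => phi phiX.
by rewrite !fctE Px ?Qy // /ev (linear_onB phiX.1).
Qed.

Lemma reflexive_sphere {Phi : (X -> R^o) -> R^o} : reflexive_space [set: X] NX ->
  sphere bidual_set bidual_norm Phi ->
  exists2 x : X, `|x| = 1 & forall phi, Xdual_set X phi -> Phi phi = phi x.
Proof.
move=> Xrefl [PhiX Phi1]; have [x _ Phi_ev] := Xrefl Phi PhiX.
exists x => //; rewrite -bidual_norm_ev -Phi1; apply: eq_dual_norm => phi phiX.
by rewrite Phi_ev.
Qed.

Lemma rotund_of_dual_smooth (eps : R) : 0 <= eps ->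
  eps_smooth (Xdual_set X) (Xdual_norm X) eps -> eps_rotund [set: X] NX eps.
Proof.
move=> eps_ge0 smooth phi [phiX phi1]; apply: diam_le => // x y [[_ x1] phix] [[_ y1] phiy].
have J_ev z : `|z| = 1 -> phi z = 1 -> Jmap (Xdual_set X) (Xdual_norm X) phi (ev z).
  move=> z1 phiz; split; last by rewrite /ev phiz -phi1.
  by split; [exact (ev_bidual gauged_subspace_normed z I) | rewrite bidual_norm_ev].
rewrite /= -(@bidual_norm_sub_ev (ev x) (ev y) x y) //.
apply: le_trans (smooth phi (conj phiX phi1)).
apply: le_diam (J_ev x x1 phix) (J_ev y y1 phiy) => P Q [PS _] [QS _].
exact (dual_sphere_distance_le2 gauged_dual PS QS).
Qed.

Lemma smooth_of_dual_rotund (eps : R) :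
  eps_rotund (Xdual_set X) (Xdual_norm X) eps -> eps_smooth [set: X] NX eps.
Proof.
move=> rotund z [_ z1].
have ev_sphere : sphere bidual_set bidual_norm (ev z).
  by split; [exact (ev_bidual gauged_subspace_normed z I) | rewrite bidual_norm_ev].
by have := rotund _ ev_sphere; rewrite /Jmap /ev z1.
Qed.

Lemma dual_rotund_of_smooth (eps : R) : reflexive_space [set: X] NX ->
  eps_smooth [set: X] NX eps -> eps_rotund (Xdual_set X) (Xdual_norm X) eps.
Proof.
move=> Xrefl smooth Phi PhiS; have [x x1 Phi_ev] := reflexive_sphere Xrefl PhiS.
suff -> : [set phi | sphere (Xdual_set X) (Xdual_norm X) phi /\ Phi phi = 1] =
          Jmap [set: X] NX x by exact: smooth.
apply/seteqP; split=> phi [[phiX phi1] e]; split=> //.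
  by rewrite x1 -Phi_ev.
by rewrite Phi_ev // e x1.
Qed.

Lemma dual_smooth_of_rotund (eps : R) : 0 <= eps -> reflexive_space [set: X] NX ->
  eps_rotund [set: X] NX eps -> eps_smooth (Xdual_set X) (Xdual_norm X) eps.
Proof.
move=> eps_ge0 Xrefl rotund phi [phiX phi1]; apply: diam_le => // P Q [PS P1] [QS Q1].
have [x x1 Px] := reflexive_sphere Xrefl PS.
have [y y1 Qy] := reflexive_sphere Xrefl QS.
rewrite (bidual_norm_sub_ev Px Qy); apply: le_trans (rotund phi (conj phiX phi1)).
apply: (@le_diam _ _ _ _ 2) => [u v [[_ u1] _] [[_ v1] _]||].
- by apply: le_trans (ler_normB u v) _; rewrite u1 v1.
- by split; [split | rewrite -Px // P1 phi1].
- by split; [split | rewrite -Qy // Q1 phi1].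
Qed.

End NormedDuality.

Theorem theorem2p13 (R : realType) (X : normedModType R) (eps : R)
  (heps0 : 0 <= eps) (heps2 : eps < 2) :
  let NX := fun x : X => `|x| in
  [/\ (eps_smooth (Xdual_set X) (Xdual_norm X) eps -> eps_rotund [set: X] NX eps),
      (eps_rotund (Xdual_set X) (Xdual_norm X) eps -> eps_smooth [set: X] NX eps) &
      (reflexive_space [set: X] NX ->
         (eps_smooth [set: X] NX eps <-> eps_rotund (Xdual_set X) (Xdual_norm X) eps) /\
         (eps_rotund [set: X] NX eps <-> eps_smooth (Xdual_set X) (Xdual_norm X) eps))].
Proof.
move=> NX; split=> [||Xrefl]; [exact: rotund_of_dual_smooth | exact: smooth_of_dual_rotund |].
split; split.
- exact: dual_rotund_of_smooth.
- exact: smooth_of_dual_rotund.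
- exact: dual_smooth_of_rotund.
- exact: rotund_of_dual_smooth.
Qed.
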